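(* Let $[Z_i(\tau_i,u_i)]_{i=1}^N$ be per-agent return distributions with quantile functions $\theta_i(\tau_i,u_i,w)$, let $\alpha\in(0,1]$, let $\bar u_i=\arg\max_{u_i}\mathrm{VaR}_\alpha[Z_i(\tau_i,u_i)]$ and $\bar{\boldsymbol u}=(\bar u_1,\dots,\bar u_N)$, let $Q_{mix}:\mathbb{R}^N\to\mathbb{R}$ be nondecreasing in each argument (not depending on $\boldsymbol u$), let $\theta_r(\boldsymbol\tau,\boldsymbol u,w)\le0$ for all $\boldsymbol u,w$, and let the mask be $m_\alpha(\boldsymbol\tau,\boldsymbol u)=0$ if $\boldsymbol u=\bar{\boldsymbol u}$ and $1$ otherwise. Let $Z_{jt}(\boldsymbol\tau,\boldsymbol u)$ be a joint return distribution (e.g. represented as a Dirac mixture $\sum_{j=1}^J p_j(\boldsymbol\tau,\boldsymbol u)\delta_{\theta(\boldsymbol\tau,\boldsymbol u,w_j)}$) whose quantile function is $$\theta(\boldsymbol\tau,\boldsymbol u,w)=Q_{mix}(\theta_1(\tau_1,u_1,w),\dots,\theta_N(\tau_N,u_N,w))+m_\alpha(\boldsymbol\tau,\boldsymbol u)\,\theta_r(\boldsymbol\tau,\boldsymbol u,w),\qquad w\in(0,1].$$ Then $[Z_i]_{i=1}^N$ satisfy the RIGM principle for $Z_{jt}$ with risk metric $\mathrm{VaR}_\alpha$, i.e. $\arg\max_{\boldsymbol u}\mathrm{VaR}_\alpha[Z_{jt}(\boldsymbol\tau,\boldsymbol u)]=\bar{\boldsymbol u}$.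
   Context: There are $N$ agents; agent $i$ has observation history $\tau_i$ and finite action set $U_i$; $\boldsymbol\tau=(\tau_1,\dots,\tau_N)$, $\boldsymbol u=(u_1,\dots,u_N)$. For a real random variable $Z$ with CDF $F_Z$, its quantile function is $\theta_Z(\omega)=\inf\{z\in\mathbb{R}:\omega\le F_Z(z)\}$, $\omega\in(0,1]$, and $\mathrm{VaR}_\alpha(Z)=\theta_Z(\alpha)$. RIGM principle: $\arg\max_{\boldsymbol u}\mathrm{VaR}_\alpha[Z_{jt}(\boldsymbol\tau,\boldsymbol u)]=(\arg\max_{u_1}\mathrm{VaR}_\alpha[Z_1(\tau_1,u_1)],\dots,\arg\max_{u_N}\mathrm{VaR}_\alpha[Z_N(\tau_N,u_N)])$. Standing assumption of the paper: argmax sets are singletons (ties broken by smallest index). *)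

From HB Require Import structures.
From mathcomp Require Import all_boot all_order all_algebra.
From mathcomp Require Import all_classical all_reals.
From mathcomp Require Import topology normedtype.
Set Implicit Arguments. Unset Strict Implicit. Unset Printing Implicit Defensive.
Import numFieldNormedType.Exports.
Import Order.TTheory GRing.Theory Num.Theory.
Local Open Scope classical_set_scope.
Local Open Scope ring_scope.

Definition is_cdf (R : realType) (F : R -> R) : Prop :=
  [/\ (forall x y, x <= y -> F x <= F y),
      (forall x, F z @[z --> x^'+] --> F x),
      F z @[z --> -oo] --> (0 : R)
    & F z @[z --> +oo] --> (1 : R)].

Definition quantile (R : realType) (F : R -> R) (w : R) : R :=
  inf [set z | w <= F z].

Definition VaR (R : realType) (alpha : R) (F : R -> R) : R := quantile F alpha.

Definition argmax_set (R : realType) (X : finType) (f : X -> R) : {set X} :=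
  [set x | [forall y, f y <= f x]].

Definition upd (R : realType) (N : nat) (x : {ffun 'I_N -> R}) (i : 'I_N) (a : R)
  : {ffun 'I_N -> R} := [ffun j => if j == i then a else x j].

From HB Require Import structures.
From mathcomp Require Import all_boot all_order all_algebra.
From mathcomp Require Import all_classical all_reals.
From mathcomp Require Import topology normedtype.
Import Order.TTheory GRing.Theory Num.Theory.
Import numFieldNormedType.Exports.
Set Implicit Arguments. Unset Strict Implicit. Unset Printing Implicit Defensive.
Local Open Scope ring_scope.

(* At [ubar] the mask vanishes, so the joint VaR equals [Qmix] of the
   individual VaRs at their maximisers.  At any other [u] the nonpositive
   residual [theta_r] can only lower the joint VaR below [Qmix] of the
   individual VaRs, which in turn is at most its value at [ubar] because [Qmix]
   is monotone and each [ubar i] maximises the i-th VaR.  Hence [ubar] is a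
   maximiser, and the assumed uniqueness of the maximiser makes it the only
   one. *)

Section MonotoneInEachArgument.

Variables (R : realType) (N : nat) (Q : {ffun 'I_N -> R} -> R).
Hypothesis Q_upd_mono : forall x i a b, a <= b -> Q (upd x i a) <= Q (upd x i b).

Definition splice (x y : {ffun 'I_N -> R}) (k : nat) : {ffun 'I_N -> R} :=
  [ffun i : 'I_N => if (i < k)%N then y i else x i].

Lemma splice0 x y : splice x y 0 = x.
Proof. by apply/ffunP => i; rewrite ffunE ltn0. Qed.

Lemma spliceN x y : splice x y N = y.
Proof. by apply/ffunP => i; rewrite ffunE ltn_ord. Qed.

Lemma splice_upd x y (i : 'I_N) :
  splice x y i = upd (splice x y i) i (x i) /\
  splice x y i.+1 = upd (splice x y i) i (y i).
Proof.
split; apply/ffunP => j; rewrite !ffunE; case: eqP => [-> | /eqP neq_ji].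
- by rewrite ltnn.
- by [].
- by rewrite ltnSn.
- by rewrite ltnS leq_eqVlt val_eqE (negbTE neq_ji).
Qed.

Lemma ffun_le_mono (x y : {ffun 'I_N -> R}) : (forall i, x i <= y i) -> Q x <= Q y.
Proof.
move=> le_xy; rewrite -[y](spliceN x) -[in Q x](splice0 x y).
suff : forall k, (k <= N)%N -> Q (splice x y 0) <= Q (splice x y k) by apply.
elim=> [// | k IHk lt_kN].
apply: le_trans (IHk (ltnW lt_kN)) _.
have [E1 E2] := splice_upd x y (Ordinal lt_kN).
rewrite E2 {1}E1.
exact: Q_upd_mono.
Qed.

End MonotoneInEachArgument.

Lemma argmax_setP (R : realType) (X : finType) (f : X -> R) x :
  reflect (forall y, f y <= f x) (x \in argmax_set f).
Proof. by rewrite inE; apply: forallP. Qed.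

Theorem theorem7 (R : realType) (N : nat)
  (T : 'I_N -> Type) (U : 'I_N -> finType) (tau : forall i, T i)
  (F : forall i, T i -> U i -> R -> R)
  (Fjt : (forall i, T i) -> {dffun forall i : 'I_N, U i} -> R -> R)
  (Qmix : {ffun 'I_N -> R} -> R)
  (theta_r : (forall i, T i) -> {dffun forall i : 'I_N, U i} -> R -> R)
  (alpha : R) (ubar : {dffun forall i : 'I_N, U i}) :
  0 < alpha <= 1 ->
  (forall i t a, is_cdf (F i t a)) ->
  (forall t u, is_cdf (Fjt t u)) ->
  (forall i, argmax_set (fun a => VaR alpha (F i (tau i) a)) = [set ubar i]) ->
  (forall x i a b, a <= b -> Qmix (upd x i a) <= Qmix (upd x i b)) ->
  (forall u w, 0 < w <= 1 -> theta_r tau u w <= 0) ->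
  (forall u w, 0 < w <= 1 ->
     quantile (Fjt tau u) w =
       Qmix [ffun i => quantile (F i (tau i) (u i)) w]
       + (if u == ubar then 0 else 1) * theta_r tau u w) ->
  (exists ustar, argmax_set (fun u => VaR alpha (Fjt tau u)) = [set ustar]) ->
  argmax_set (fun u => VaR alpha (Fjt tau u)) = [set ubar].
Proof.
move=> alpha01 _ _ argmax_i Qmix_mono theta_r_le0 quantile_jt [ustar argmax_jt].
have ubar_i_max i a : VaR alpha (F i (tau i) a) <= VaR alpha (F i (tau i) (ubar i)).
  have /argmax_setP ubar_i_in : ubar i \in argmax_set (fun a => VaR alpha (F i (tau i) a)).
    by rewrite argmax_i set11.
  exact: ubar_i_in.
have ubar_max : ubar \in argmax_set (fun u => VaR alpha (Fjt tau u)).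
  apply/argmax_setP => u; rewrite /VaR !quantile_jt // eqxx mul0r addr0.
  have mix_le : Qmix [ffun i => VaR alpha (F i (tau i) (u i))]
                <= Qmix [ffun i => VaR alpha (F i (tau i) (ubar i))].
    by apply: ffun_le_mono => // i; rewrite !ffunE.
  apply: le_trans mix_le; rewrite gerDl.
  case: (u == ubar); first by rewrite mul0r.
  by rewrite mul1r theta_r_le0.
by move: ubar_max; rewrite argmax_jt => /set1P ->.
Qed.
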